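(* Let $D$ be a division ring. Then the only partial ideals of $D$ are $0$ and $D$.
   Context: For a ring $R$, a partial ideal is a subset $I\subseteq R$ such that for all $a,b\in R$ with $ab=ba$: if $a,b\in I$ then $a+b\in I$, and if $b\in I$ then $ab\in I$. *)

From mathcomp Require Import all_boot all_algebra.
Set Implicit Arguments. Unset Strict Implicit. Unset Printing Implicit Defensive.
Import GRing.Theory.
Local Open Scope ring_scope.

Definition is_division_ring (R : unitRingType) : Prop :=
  forall x : R, x != 0 -> x \is a GRing.unit.

Definition is_partial_ideal (R : pzRingType) (I : R -> Prop) : Prop :=
  forall a b : R, a * b = b * a ->
    (I a -> I b -> I (a + b)) /\ (I b -> I (a * b)).

From mathcomp Require Import all_boot all_algebra.
From Stdlib Require Import Classical.
Set Implicit Arguments. Unset Strict Implicit.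
Local Open Scope ring_scope.
Import GRing.Theory.

(* A partial ideal absorbs products along commuting pairs only, but that is
   enough: 0 commutes with everything, so a nonempty partial ideal contains 0;
   a nonzero element u commutes with u^-1, so it pulls in u^-1 u = 1; and 1
   commutes with everything, so it pulls in the whole ring. *)

Lemma partial_ideal0 (R : pzRingType) (I : R -> Prop) (x : R) :
  is_partial_ideal I -> I x -> I 0.
Proof.
move=> hI Ix; have hc : 0 * x = x * 0 by rewrite mul0r mulr0.
by have := proj2 (hI 0 x hc) Ix; rewrite mul0r.
Qed.

Lemma partial_ideal1_full (R : pzRingType) (I : R -> Prop) :
  is_partial_ideal I -> I 1 -> forall x, I x.
Proof.
move=> hI I1 x; have hc : x * 1 = 1 * x by rewrite mul1r mulr1.
by have := proj2 (hI x 1 hc) I1; rewrite mulr1.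
Qed.

Lemma partial_ideal_unit1 (R : unitRingType) (I : R -> Prop) (u : R) :
  is_partial_ideal I -> u \is a GRing.unit -> I u -> I 1.
Proof.
move=> hI Uu Iu; have hc : u^-1 * u = u * u^-1 by rewrite mulVr // divrr.
by have := proj2 (hI u^-1 u hc) Iu; rewrite mulVr.
Qed.

Theorem proposition2p7 (D : unitRingType) (hD : is_division_ring D)
  (I : D -> Prop) (hI : is_partial_ideal I) (hne : exists x, I x) :
  (forall x, I x <-> x = 0) \/ (forall x, I x).
Proof.
have [x Ix] := hne.
case: (classic (exists2 y, I y & y != 0)) => [[y Iy ny]|Inz].
  by right; exact: partial_ideal1_full hI (partial_ideal_unit1 hI (hD y ny) Iy).
left=> z; split=> [Iz|->]; last exact: partial_ideal0 hI Ix.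
by apply: NNPP => /eqP nz; apply: Inz; exists z.
Qed.
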